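(* Let $S:\mathbb{R}^m\times\mathbb{R}^n\to\mathbb{R}^q$ be a bilinear map with lifted linear operator $\mathscr{S}$, let $\mathcal{K}\subseteq\mathbb{R}^m\times\mathbb{R}^n$, let $\mathcal{K}'\subseteq\mathbb{R}^{m\times n}$ satisfy $\mathcal{K}'\cap\{W:\operatorname{rank}(W)\le1\}=\{xy^T:(x,y)\in\mathcal{K}\}$, and let $\mathcal{M}=\mathcal{K}'-\mathcal{K}'$. Assume $\mathcal{N}(\mathscr{S},1)\cap\mathcal{M}=\{0\}$. Let $\mathbf{M}=\sigma uv^T\in\mathcal{K}'$ be a rank one matrix ($\sigma>0$, $\|u\|_2=\|v\|_2=1$). Suppose that for every $X\in\mathcal{N}(\mathscr{S},2)\cap\mathcal{M}\setminus\{0\}$ either $u\notin\mathcal{C}(X)$ or $v\notin\mathcal{R}(X)$. Then, given $z=\mathscr{S}(\mathbf{M})$, $\mathbf{M}$ is successfully recovered by solving ''minimize $\operatorname{rank}(W)$ subject to $\mathscr{S}(W)=z$, $W\in\mathcal{K}'$'', i.e. $\mathbf{M}$ is its unique optimal solution.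
   Context: A map is bilinear if linear in each argument separately. For $j=1,\dots,q$ let $S_j$ be the unique matrix with $(S(x,y))_j=x^TS_jy$; the lifted operator is $(\mathscr{S}(W))_j=\operatorname{tr}(S_j^TW)$. $\mathcal{N}(\mathscr{S},k)=\{X:\operatorname{rank}(X)\le k,\ \mathscr{S}(X)=0\}$. $\mathcal{K}'-\mathcal{K}'=\{X_1-X_2:X_1,X_2\in\mathcal{K}'\}$. $\mathcal{C}(X)$ and $\mathcal{R}(X)$ denote the column space and row space of $X$. *)

From HB Require Import structures.
From mathcomp Require Import all_boot all_order all_algebra.
Set Implicit Arguments. Unset Strict Implicit. Unset Printing Implicit Defensive.
Import Order.TTheory GRing.Theory Num.Theory.
Local Open Scope ring_scope.

Definition bilinear_map (R : rcfType) (m n q : nat)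
  (S : 'cV[R]_m -> 'cV[R]_n -> 'cV[R]_q) : Prop :=
  (forall (a : R) x1 x2 y, S (a *: x1 + x2) y = a *: S x1 y + S x2 y) /\
  (forall (a : R) x y1 y2, S x (a *: y1 + y2) = a *: S x y1 + S x y2).

Definition evec (R : rcfType) (m : nat) (i : 'I_m) : 'cV[R]_m := delta_mx i 0.

(* S_j : the matrix with (S(x,y))_j = x^T S_j y, i.e. (S_j)_{ik} = S(e_i,e_k)_j *)
Definition Smat (R : rcfType) (m n q : nat)
  (S : 'cV[R]_m -> 'cV[R]_n -> 'cV[R]_q) (j : 'I_q) : 'M[R]_(m, n) :=
  \matrix_(i < m, k < n) S (evec R i) (evec R k) j 0.

Definition liftS (R : rcfType) (m n q : nat)
  (S : 'cV[R]_m -> 'cV[R]_n -> 'cV[R]_q) (W : 'M[R]_(m, n)) : 'cV[R]_q :=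
  \col_j \tr ((Smat S j)^T *m W).

Definition Nset (R : rcfType) (m n q : nat)
  (S : 'cV[R]_m -> 'cV[R]_n -> 'cV[R]_q) (k : nat) (X : 'M[R]_(m, n)) : Prop :=
  (\rank X <= k)%N /\ liftS S X = 0.

Definition diffset (R : rcfType) (m n : nat) (K' : 'M[R]_(m, n) -> Prop)
  (X : 'M[R]_(m, n)) : Prop :=
  exists X1 X2, K' X1 /\ K' X2 /\ X = X1 - X2.

Definition norm2 (R : rcfType) (m : nat) (u : 'cV[R]_m) : R :=
  Num.sqrt (\sum_i u i 0 ^+ 2).

Definition in_colspace (R : rcfType) (m n : nat) (u : 'cV[R]_m) (X : 'M[R]_(m, n)) : bool :=
  (u^T <= X^T)%MS.
Definition in_rowspace (R : rcfType) (m n : nat) (v : 'cV[R]_n) (X : 'M[R]_(m, n)) : bool :=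
  (v^T <= X)%MS.

Definition rank_opt (R : rcfType) (m n q : nat)
  (S : 'cV[R]_m -> 'cV[R]_n -> 'cV[R]_q) (z : 'cV[R]_q)
  (K' : 'M[R]_(m, n) -> Prop) (W : 'M[R]_(m, n)) : Prop :=
  (liftS S W = z /\ K' W) /\
  forall W', liftS S W' = z -> K' W' -> (\rank W <= \rank W')%N.

Definition unique_rank_opt (R : rcfType) (m n q : nat)
  (S : 'cV[R]_m -> 'cV[R]_n -> 'cV[R]_q) (z : 'cV[R]_q)
  (K' : 'M[R]_(m, n) -> Prop) (M : 'M[R]_(m, n)) : Prop :=
  rank_opt S z K' M /\ forall W, rank_opt S z K' W -> W = M.

From HB Require Import structures.
From mathcomp Require Import all_boot all_order all_algebra.
Import Order.TTheory GRing.Theory Num.Theory.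
Local Open Scope ring_scope.

(* M is feasible of rank one, and no feasible W has rank 0: otherwise M = M - 0
   would be a nonzero element of N(S,1) in K' - K'.  If W is another optimum,
   then W = x y^T and X = M - W lies in N(S,2) and in K' - K'.  Rank one is
   excluded by the same hypothesis, so X has rank two; but then the row space
   of X = sigma u v^T - x y^T is spanned by v^T and y^T, hence contains v^T,
   and likewise its column space contains u, contradicting the assumption. *)

Section OuterProducts.
Variables (F : fieldType) (p r : nat).
Implicit Types (a b : 'cV[F]_p) (c d : 'rV[F]_r).

Lemma mxrank_outer_le1 a c : (\rank (a *m c) <= 1)%N.
Proof. exact: leq_trans (mxrankM_maxl _ _) (rank_leq_col _). Qed.

Lemma outer_neq0 a c : a != 0 -> c != 0 -> a *m c != 0.
Proof.
by move=> a_neq0 c_neq0; rewrite mulmx_free_eq0 // /row_free rank_rV c_neq0.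
Qed.

Lemma outer_sum_eq a b c d : a *m c + b *m d = row_mx a b *m col_mx c d.
Proof. by rewrite mul_row_col. Qed.

Lemma mxrank_outer_sum_le2 a b c d : (\rank (a *m c + b *m d)%R <= 2)%N.
Proof.
by rewrite outer_sum_eq; apply: leq_trans (mxrankM_maxl _ _) (rank_leq_col _).
Qed.

(* The row space lies in that of col_mx c d, of rank at most 2, so rank 2 forces equality. *)
Lemma outer_sum_rowspace a b c d :
  (1 < \rank (a *m c + b *m d)%R)%N -> (c <= (a *m c + b *m d)%R)%MS.
Proof.
set X := _ + _ => rkX.
have sXcd : (X <= col_mx c d)%MS by rewrite /X outer_sum_eq submxMl.
have rk_cd : (\rank (col_mx c d) <= 2)%N := rank_leq_row _.
have : (col_mx c d <= X)%MS.
  rewrite -(mxrank_leqif_sup sXcd).2 eqn_leq mxrankS //=.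
  exact: leq_trans rk_cd rkX.
by rewrite col_mx_sub => /andP[].
Qed.

End OuterProducts.

Lemma outer_sum_colspace (F : fieldType) (p r : nat)
  (a b : 'cV[F]_p) (c d : 'rV[F]_r) :
  (1 < \rank (a *m c + b *m d)%R)%N -> (a^T <= (a *m c + b *m d)%R^T)%MS.
Proof.
have eXt : (a *m c + b *m d)^T = c^T *m a^T + d^T *m b^T.
  by rewrite linearD /= !trmx_mul.
by move=> rkX; rewrite eXt outer_sum_rowspace // -eXt mxrank_tr.
Qed.

Lemma norm2_0 (R : rcfType) (k : nat) : norm2 (0 : 'cV[R]_k) = 0.
Proof. by rewrite /norm2 big1 ?sqrtr0 // => i _; rewrite mxE expr0n. Qed.

Section LiftedOperator.
Context {R : rcfType} {m n q : nat} {S : 'cV[R]_m -> 'cV[R]_n -> 'cV[R]_q}.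

Lemma liftSB (A B : 'M[R]_(m, n)) : liftS S (A - B) = liftS S A - liftS S B.
Proof. by apply/matrixP => i j; rewrite !mxE mulmxBr linearB. Qed.

Context {K' : 'M[R]_(m, n) -> Prop}.
Hypothesis N1_diffset_trivial :
  forall X : 'M[R]_(m, n), (Nset S 1 X /\ diffset K' X) <-> X = 0.

Lemma feasible_eq_of_rank_diff_le1 {M W : 'M[R]_(m, n)} :
  K' M -> K' W -> liftS S W = liftS S M -> (\rank (M - W)%R <= 1)%N -> W = M.
Proof.
move=> KM KW SW rk_le1; apply/eqP; rewrite eq_sym -subr_eq0; apply/eqP.
apply/N1_diffset_trivial; split; last by exists M, W.
by split; rewrite // liftSB SW subrr.
Qed.

Lemma rank1_rank_opt (M : 'M[R]_(m, n)) :
  K' M -> (\rank M <= 1)%N -> M != 0 -> rank_opt S (liftS S M) K' M.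
Proof.
move=> KM rkM M_neq0; split=> // W SW KW.
apply: (leq_trans rkM); rewrite lt0n mxrank_eq0.
apply: contraNneq M_neq0 => W0.
have <- : W = M by apply: (feasible_eq_of_rank_diff_le1 KM KW SW); rewrite W0 subr0.
by rewrite W0.
Qed.

End LiftedOperator.

Theorem theorem2 (R : rcfType) (m n q : nat)
  (S : 'cV[R]_m -> 'cV[R]_n -> 'cV[R]_q)
  (K : 'cV[R]_m * 'cV[R]_n -> Prop) (K' : 'M[R]_(m, n) -> Prop)
  (sigma : R) (u : 'cV[R]_m) (v : 'cV[R]_n) :
  bilinear_map S ->
  (forall W : 'M[R]_(m, n),
     (K' W /\ (\rank W <= 1)%N) <-> exists x y, K (x, y) /\ W = x *m y^T) ->
  (forall X : 'M[R]_(m, n), (Nset S 1 X /\ diffset K' X) <-> X = 0) ->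
  0 < sigma -> norm2 u = 1 -> norm2 v = 1 ->
  K' (sigma *: (u *m v^T)) ->
  (forall X : 'M[R]_(m, n), Nset S 2 X -> diffset K' X -> X != 0 ->
     ~~ in_colspace u X \/ ~~ in_rowspace v X) ->
  unique_rank_opt S (liftS S (sigma *: (u *m v^T))) K' (sigma *: (u *m v^T)).
Proof.
move=> _ HK HN1 sigma_gt0 nu nv KM Hcr.
have sigma_neq0 : sigma != 0 by rewrite gt_eqF.
have nz_of_norm k (w : 'cV[R]_k) : norm2 w = 1 -> w != 0.
  by apply: contra_eqN => /eqP->; rewrite norm2_0 eq_sym oner_eq0.
set M := sigma *: (u *m v^T) in KM *.
have eM : M = (sigma *: u) *m v^T by rewrite /M scalemxAl.
have rkM : (\rank M <= 1)%N by rewrite eM mxrank_outer_le1.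
have M_neq0 : M != 0.
  by rewrite eM outer_neq0 ?trmx_eq0 ?scaler_eq0 ?negb_or ?sigma_neq0 ?nz_of_norm.
split=> [|W [[SW KW] W_opt]]; first exact: rank1_rank_opt.
have [x [y [_ EW]]] := (HK W).1 (conj KW (leq_trans (W_opt M erefl KM) rkM)).
have [rk_le1|rk_gt1] := leqP (\rank (M - W)%R) 1.
  exact (feasible_eq_of_rank_diff_le1 HN1 KM KW SW rk_le1).
have eX : M - W = (sigma *: u) *m v^T + (- x) *m y^T by rewrite eM EW mulNmx.
have X_neq0 : M - W != 0 by rewrite -mxrank_eq0 -lt0n (ltn_trans _ rk_gt1).
have NX : Nset S 2 (M - W).
  by split; rewrite ?liftSB ?SW ?subrr // eX mxrank_outer_sum_le2.
have DX : diffset K' (M - W) by exists M, W.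
have [] := Hcr (M - W) NX DX X_neq0.
  rewrite /in_colspace eX -(eqmx_scale _ sigma_neq0) -linearZ /=.
  by rewrite outer_sum_colspace // -eX.
by rewrite /in_rowspace eX outer_sum_rowspace // -eX.
Qed.
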